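(* Let $\kappa$ be an infinite cardinal. Then $\clubsuit^{\Diamond}_{\kappa^+}$ implies ${\rm Gal}(\mathscr{D}_{\kappa^+},\kappa^+,\kappa^{++})$.
   Context: For a regular uncountable cardinal $\lambda$, a superclub sequence for $\lambda$ is a sequence $(S_\alpha\mid\alpha<\lambda)$ with $S_\alpha\subseteq\alpha$ for each $\alpha$, such that for every $A\in[\lambda]^\lambda$ there is $B\in[A]^\lambda$ for which $\{\alpha<\lambda\mid B\cap\alpha=S_\alpha\}$ is stationary in $\lambda$; $\clubsuit^{\Diamond}_\lambda$ is the statement that such a sequence exists. $\mathscr{D}_{\kappa^+}$ is the club filter on $\kappa^+$. ${\rm Gal}(\mathscr{D}_{\kappa^+},\kappa^+,\kappa^{++})$ (the Galvin property) means: for every sequence $(C_\alpha\mid\alpha<\kappa^{++})$ of elements of $\mathscr{D}_{\kappa^+}$ there is $I\subseteq\kappa^{++}$ with $|I|=\kappa^+$ such that $\bigcap_{\alpha\in I}C_\alpha\in\mathscr{D}_{\kappa^+}$ (i.e. contains a club of $\kappa^+$). *)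

From mathcomp Require Import all_boot.
From mathcomp Require Import boolp classical_sets functions cardinality.
Set Implicit Arguments. Unset Strict Implicit. Unset Printing Implicit Defensive.
Local Open Scope classical_set_scope.
Local Open Scope card_scope.

Definition is_wellorder {T : Type} (lt : T -> T -> Prop) : Prop :=
  (forall x, ~ lt x x) /\
  (forall x y z, lt x y -> lt y z -> lt x z) /\
  (forall x y, lt x y \/ x = y \/ lt y x) /\
  well_founded lt.

(* (L, lt) is (order-isomorphic to) the successor cardinal |K|^+ viewed as an
   initial ordinal: a well-order of cardinality > |K| all of whose proper
   initial segments have cardinality <= |K|. *)
Definition is_succ_cardinal (K L : Type) (lt : L -> L -> Prop) : Prop :=
  is_wellorder lt /\
  ~ ([set: L] #<= [set: K]) /\
  (forall a : L, [set b | lt b a] #<= [set: K]).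

Definition unbounded {L : Type} (lt : L -> L -> Prop) (C : set L) : Prop :=
  forall a, exists c, C c /\ lt a c.

(* The hypothesis "a has some element below it and C is cofinal in a with
   elements strictly between any b < a and a" says exactly that a is a limit
   ordinal > 0 with sup (C cap a) = a. *)
Definition closed {L : Type} (lt : L -> L -> Prop) (C : set L) : Prop :=
  forall a, (exists b, lt b a) ->
    (forall b, lt b a -> exists c, C c /\ lt b c /\ lt c a) -> C a.

Definition club {L : Type} (lt : L -> L -> Prop) (C : set L) : Prop :=
  closed lt C /\ unbounded lt C.

Definition stationary {L : Type} (lt : L -> L -> Prop) (S : set L) : Prop :=
  forall C, club lt C -> exists a, C a /\ S a.

Definition club_filter {L : Type} (lt : L -> L -> Prop) (X : set L) : Prop :=
  exists C, club lt C /\ C `<=` X.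

Definition below {L : Type} (lt : L -> L -> Prop) (a : L) : set L :=
  [set b | lt b a].

Definition superclub_sequence {L : Type} (lt : L -> L -> Prop)
  (S : L -> set L) : Prop :=
  (forall a, S a `<=` below lt a) /\
  forall A : set L, [set: L] #<= A ->
    exists B : set L, B `<=` A /\ [set: L] #<= B /\
      stationary lt [set a | B `&` below lt a = S a].

Definition clubsuit_diamond {L : Type} (lt : L -> L -> Prop) : Prop :=
  exists S : L -> set L, superclub_sequence lt S.

(* Gal(D_lambda, lambda, mu) where lambda = (L, lt) and mu = |M|:
   every M-indexed family of club-filter sets has a subfamily indexed by a set
   of size lambda whose intersection is in the club filter. *)
Definition Galvin {L M : Type} (lt : L -> L -> Prop) : Prop :=
  forall Cs : M -> set L, (forall i, club_filter lt (Cs i)) ->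
    exists I : set M, I #= [set: L] /\
      club_filter lt (\bigcap_(i in I) Cs i).

From Pilot Require Import Defs.
From mathcomp Require Import all_boot.
From mathcomp Require Import boolp classical_sets functions cardinality.
Local Open Scope classical_set_scope.
Local Open Scope card_scope.
Set Implicit Arguments. Unset Strict Implicit.

(* Given clubs D i (i < kappa^{++}), the superclub sequence S yields sets
   B i of size kappa^+ inside D i whose guessing sets
   G i = {a | B i cap a = S a} are stationary. As kappa^{++} > kappa^+ * kappa,
   some index i0 has the property that every a in G i0 is guessed by more
   than kappa indices. Choosing above each j < kappa^+ a point e j of G i0,
   and then injectively an index f j guessed at e j, the sets B (f j) agree
   with B i0 below e j > j. The accumulation points of B i0 lying in the
   diagonal intersection of the D (f j) form a club inside every D (f j). *)

Lemma card_le_inj T U (A : set T) (B : set U) (f : T -> U) :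
  (forall x, A x -> B (f x)) ->
  (forall x y, A x -> A y -> f x = f y -> x = y) -> A #<= B.
Proof.
move=> fAB finj.
have [g] : $|{injfun A >-> B}|.
  apply/injfunPex; exists f; first by move=> x; exact: fAB.
  by move=> x y; rewrite !in_setE; exact: finj.
exact: inj_card_le.
Qed.

Lemma card_le_injP T U (u0 : U) (A : set T) (B : set U) : A #<= B ->
  exists f : T -> U, (forall x, A x -> B (f x)) /\
    (forall x y, A x -> A y -> f x = f y -> x = y).
Proof.
move/card_leP => -[f].
exists (fun x => if pselect (A x) is left Ax then val (f (exist _ x (mem_set Ax)))
                 else u0).
split.
- move=> x Ax; case: pselect => // h; exact: set_mem (valP _).
- move=> x y Ax Ay; case: pselect => // hx; case: pselect => // hy.
  move=> /val_inj /(@inj _ _ _ f) => /(_ (mem_set I) (mem_set I)) [] //.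
Qed.

Lemma card_le_surj T U (A : set T) (B : set U) (f : T -> U) :
  (forall y, B y -> exists2 x, A x & f x = y) -> B #<= A.
Proof.
move=> fB; apply: card_le_trans (card_image_le f A).
by apply: subset_card_le => y /fB [x Ax <-]; exists x.
Qed.

Lemma card_le_point T U (A : set T) (B : set U) x :
  A #<= B -> A x -> exists y, B y.
Proof.
move=> AB Ax; case: (pselect (exists y, B y)) => // nB.
have B0 : B = set0 by apply/seteqP; split=> // y By; apply: nB; exists y.
by move: AB; rewrite B0 => /card_le0P A0; move: Ax; rewrite A0.
Qed.

Lemma card_le_setX T T' U U' (A : set T) (A' : set T') (B : set U) (B' : set U') :
  A #<= A' -> B #<= B' -> A `*` B #<= A' `*` B'.
Proof.
move=> AA BB; case: (pselect (exists p, (A `*` B) p)) => [[[a b] [/= Aa Bb]]|nAB].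
  have [a' _] := card_le_point AA Aa; have [b' _] := card_le_point BB Bb.
  have [f [fA finj]] := card_le_injP a' AA; have [g [gB ginj]] := card_le_injP b' BB.
  apply: (card_le_inj (f := fun p => (f p.1, g p.2))).
    by move=> [x y] [/= Ax By]; split; [exact: fA|exact: gB].
  move=> [x y] [x' y'] [/= Ax By] [/= Ax' By'] [/finj e1 /ginj e2].
  by rewrite e1 // e2.
have -> : A `*` B = set0 by apply/seteqP; split=> // p ABp; apply: nAB; exists p.
exact: card_ge0.
Qed.

Lemma infinite_two T (A : set T) : infinite_set A ->
  exists q1 q2, A q1 /\ A q2 /\ q1 <> q2.
Proof.
move=> Ainf; have [q1 Aq1] := infinite_setN0 Ainf.
have [q2 [Aq2 q21]] := infinite_setN0 (infinite_setD Ainf (finite_set1 q1)).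
by exists q1, q2; split; [|split=> // e; apply: q21; rewrite e].
Qed.

Lemma card_le_setU1 T U (A : set T) (B : set U) (p : T) (q1 q2 : U) :
  B q1 -> B q2 -> q1 <> q2 -> A #<= B -> A `|` [set p] #<= B `*` B.
Proof.
move=> Bq1 Bq2 q12 /(card_le_injP q1) [f [fA finj]].
apply: (card_le_inj (f := fun x =>
  match pselect (x = p) with left _ => (q1, q2) | right _ => (f x, q1) end)).
  move=> x Ax; case: pselect => [_|nx]; first by split.
  by case: Ax => // Ax; split => //; apply: fA.
move=> x y Ax Ay.
case: (pselect (x = p)) => [->|nx]; case: (pselect (y = p)) => [->|ny] //.
- by case=> _ /esym.
- by case=> _.
- by case: Ax => // Ax; case: Ay => // Ay [/finj]; apply.
Qed.

Lemma card_le_cover T I P Q (A : set T) (D : set I) (F : I -> set T)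
  (SP : set P) (SQ : set Q) :
  (forall x, A x -> exists2 d, D d & F d x) ->
  D #<= SP -> (forall d, D d -> F d #<= SQ) -> A #<= SP `*` SQ.
Proof.
move=> AF DP FQ; case: (pselect (exists x, A x)) => [[x0 Ax0]|nA]; last first.
  have -> : A = set0 by apply/seteqP; split=> // x Ax; apply: nA; exists x.
  exact: card_ge0.
have [d0 Dd0 Fx0] := AF x0 Ax0.
have [p0 _] := card_le_point DP Dd0; have [q0 _] := card_le_point (FQ d0 Dd0) Fx0.
have [dx Hdx] : {dx : T -> I & forall x, A x -> D (dx x) /\ F (dx x) x}.
  apply: (@choice _ _ (fun x d => A x -> D d /\ F d x)) => x.
  by case: (pselect (A x)) => [/AF [d]|nx]; [exists d|exists d0].
have [h [hP hinj]] := card_le_injP p0 DP.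
have [g Hg] : {g : I -> T -> Q & forall d, D d ->
    (forall x, F d x -> SQ (g d x)) /\
    (forall x y, F d x -> F d y -> g d x = g d y -> x = y)}.
  apply: (@choice _ _ (fun d (g : T -> Q) => D d ->
    (forall x, F d x -> SQ (g x)) /\
    (forall x y, F d x -> F d y -> g x = g y -> x = y))) => d.
  case: (pselect (D d)) => [Dd|nd]; last by exists (fun _ => q0).
  by have [g Hg] := card_le_injP q0 (FQ d Dd); exists g.
apply: (card_le_inj (f := fun x => (h (dx x), g (dx x) x))).
  move=> x Ax; have [Ddx Fx] := Hdx x Ax.
  by split; [exact: hP|exact: (proj1 (Hg _ Ddx))].
move=> x y Ax Ay [e1 e2]; have [Ddx Fx] := Hdx x Ax; have [Ddy Fy] := Hdx y Ay.
have edx : dx x = dx y by apply: hinj.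
by apply: (proj2 (Hg _ Ddx)) => //; [rewrite edx|rewrite e2 edx].
Qed.

Lemma wf_least T (lt : T -> T -> Prop) (P : T -> Prop) :
  well_founded lt -> (exists x, P x) -> exists x, P x /\ forall y, lt y x -> ~ P y.
Proof.
move=> wf [x Px]; elim: (wf x) Px => {}x _ IH Px.
case: (pselect (exists y, lt y x /\ P y)) => [[y [yx Py]]|h]; first exact: (IH y yx Py).
by exists x; split => // y yx Py; apply: h; exists y.
Qed.

Lemma greedy T Y (y0 : Y) (lt : T -> T -> Prop) (A : set T) (P : T -> Y -> Prop) :
  well_founded lt ->
  exists f : T -> Y, forall i,
    (exists y, P i y /\ forall j, A j -> lt j i -> f j <> y) ->
    P i (f i) /\ forall j, A j -> lt j i -> f j <> f i.
Proof.
move=> wf.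
pose F i (rec : forall j, lt j i -> Y) :=
  match pselect (exists y, P i y /\ forall j (H : lt j i), A j -> rec j H <> y) with
  | left e => projT1 (cid e) | right _ => y0 end.
pose f := Fix wf (fun _ => Y) F.
have feq i : f i = F i (fun j _ => f j).
  rewrite /f Fix_eq // => x g h gh.
  suff -> : g = h by [].
  by apply: functional_extensionality_dep => y;
    apply: functional_extensionality_dep => p; apply: gh.
exists f => i [y [Py Hy]].
rewrite feq /F; case: pselect => [e|ne]; last first.
  by exfalso; apply: ne; exists y; split => // j H Aj; apply: Hy.
by case: (cid e) => z [Pz Hz] /=; split => // j Aj Hj; exact: Hz.
Qed.

(* Comparison of cardinalities against a well-founded, total order on A:
   either A injects into B, or B injects into a proper initial segment of A.
   (Each element of A greedily receives a fresh element of B.) *)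
Lemma wo_card_compare T U (u0 : U) (lt : T -> T -> Prop) (A : set T) (B : set U) :
  well_founded lt -> (forall x y, lt x y \/ x = y \/ lt y x) ->
  A #<= B \/ exists2 i, A i & B #<= [set j | A j /\ lt j i].
Proof.
move=> wf tot; have [f Hf] := greedy u0 A (fun _ y => B y) wf.
case: (pselect (forall i, A i ->
    exists y, B y /\ forall j, A j -> lt j i -> f j <> y)) => [fresh|].
  left; apply: (card_le_inj (f := f)) => [x Ax|x y Ax Ay fxy].
    by case: (Hf x (fresh x Ax)).
  case: (tot x y) => [xy|[//|yx]].
    by case: (Hf y (fresh y Ay)) => _ /(_ x Ax xy).
  by case: (Hf x (fresh x Ax)) => _ /(_ y Ay yx); rewrite fxy.
move/existsNP => [i /not_implyP [Ai stuck]].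
right; exists i => //; apply: (card_le_surj (f := f)) => y By.
apply: contra_notP stuck => ny; exists y; split => // j Aj ji fj.
by apply: ny; exists j.
Qed.

Definition le_of T (lt : T -> T -> Prop) x y := lt x y \/ x = y.

Definition maxo T (lt : T -> T -> Prop) x y := if pselect (lt x y) then y else x.

Section WellOrder.
Variables (T : Type) (lt : T -> T -> Prop).
Hypothesis wo : is_wellorder lt.

Lemma wo_irr x : ~ lt x x. Proof. by case: wo. Qed.
Lemma wo_trans x y z : lt x y -> lt y z -> lt x z.
Proof. by case: wo => _ [h _]; apply: h. Qed.
Lemma wo_tot x y : lt x y \/ x = y \/ lt y x. Proof. by case: wo => _ [_ [h _]]. Qed.
Lemma wo_wf : well_founded lt. Proof. by case: wo => _ [_ [_ h]]. Qed.

Lemma le_of_trans x y z : le_of lt x y -> le_of lt y z -> le_of lt x z.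
Proof. by move=> [xy|->] [yz|<-]; [left; exact: wo_trans xy yz|left|left|right]. Qed.

Lemma le_lt_trans x y z : le_of lt x y -> lt y z -> lt x z.
Proof. by move=> [xy|->] yz //; exact: wo_trans xy yz. Qed.

Lemma not_lt x y : ~ lt x y -> le_of lt y x.
Proof. by case: (wo_tot x y) => [//|[->|h]] _; [right|left]. Qed.

Lemma maxo_l x y : le_of lt x (maxo lt x y).
Proof. by rewrite /maxo; case: pselect => h; [left|right]. Qed.

Lemma maxo_r x y : le_of lt y (maxo lt x y).
Proof. by rewrite /maxo; case: pselect => h; [right|apply: not_lt]. Qed.

Lemma maxo_lt x y z : lt x z -> lt y z -> lt (maxo lt x y) z.
Proof. by rewrite /maxo; case: pselect. Qed.

(* Goedel's well-order on pairs: compare maxima first, then lexicographically. *)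
Definition pair_lt (p q : T * T) :=
  lt (maxo lt p.1 p.2) (maxo lt q.1 q.2) \/
  (maxo lt p.1 p.2 = maxo lt q.1 q.2 /\ (lt p.1 q.1 \/ (p.1 = q.1 /\ lt p.2 q.2))).

Lemma pair_lt_wf : well_founded pair_lt.
Proof.
suff H m a b : maxo lt a b = m -> Acc pair_lt (a, b) by move=> [a b]; exact: H _ _ _ erefl.
elim: (wo_wf m) a b => {}m _ IHm a; elim: (wo_wf a) => {}a _ IHa b.
elim: (wo_wf b) => {}b _ IHb emx.
constructor => -[a' b'] [/= h|/= [e [h|[e2 h]]]].
- by rewrite emx in h; exact: (IHm _ h a' b' erefl).
- by apply: (IHa a' h b'); rewrite e emx.
- by rewrite e2 in e *; apply: (IHb b' h); rewrite e emx.
Qed.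

Lemma pair_lt_tot p q : pair_lt p q \/ p = q \/ pair_lt q p.
Proof.
case: p q => [a b] [c d]; rewrite /pair_lt /=.
case: (wo_tot (maxo lt a b) (maxo lt c d)) => [h|[e|h]]; [by left; left| |by right; right; left].
case: (wo_tot a c) => [h|[ac|h]]; [by left; right; split => //; left| |].
  subst c; case: (wo_tot b d) => [h|[<-|h]]; [|by right; left|].
    by left; right; split => //; right.
  by right; right; right; split => //; right.
by right; right; right; split => //; left.
Qed.

Lemma pair_lt_max p q :
  pair_lt p q -> le_of lt p.1 (maxo lt q.1 q.2) /\ le_of lt p.2 (maxo lt q.1 q.2).
Proof.
move=> h; have hm : le_of lt (maxo lt p.1 p.2) (maxo lt q.1 q.2).
  by case: h => [h|[e _]]; [left|right].
by split; apply: le_of_trans hm; [apply: maxo_l|apply: maxo_r].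
Qed.

End WellOrder.

Section Hessenberg.
Variables (T : Type) (lt : T -> T -> Prop).
Hypothesis wo : is_wellorder lt.

(* Comparing X x X (ordered by pair_lt) with X, a proper
   initial segment of X x X sits inside [0, m] x [0, m] for some m in X, which
   would make X no larger than [0, m), a contradiction. *)
Lemma card_square_initial (X : set T) :
  (forall x y, X y -> lt x y -> X x) -> infinite_set X ->
  (forall c, X c -> ~ (X #<= below lt c)) ->
  (forall c, X c -> infinite_set (below lt c) ->
     below lt c `*` below lt c #<= below lt c) ->
  X `*` X #<= X.
Proof.
move=> Xdown Xinf Xcard IH; have [x0 _] := infinite_setN0 Xinf.
have [//|[i [Xi1 Xi2] hi]] :=
  @wo_card_compare _ _ x0 _ (X `*` X) X (pair_lt_wf wo) (pair_lt_tot wo).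
exfalso; pose m := maxo lt i.1 i.2.
have Xm : X m by rewrite /m /maxo; case: pselect.
have hZ : X #<= (below lt m `|` [set m]) `*` (below lt m `|` [set m]).
  apply: (card_le_trans hi); apply: subset_card_le => j [_ /(pair_lt_max wo) [j1 j2]].
  by split; [case: j1 => h; [left|right]|case: j2 => h; [left|right]].
case: (pselect (finite_set (below lt m))) => [mfin|minf].
  apply: Xinf; apply: card_le_finite hZ _; apply: finite_setX;
  by rewrite finite_setU; split => //; exact: finite_set1.
have [q1 [q2 [h1 [h2 q12]]]] := infinite_two minf.
have sq := IH m Xm minf.
have Zm : below lt m `|` [set m] #<= below lt m.
  exact: card_le_trans (card_le_setU1 m h1 h2 q12 (card_lexx _)) sq.
apply: (Xcard m Xm); apply: (card_le_trans hZ).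
exact: card_le_trans (card_le_setX Zm Zm) sq.
Qed.

(* Hessenberg's theorem for initial segments: an infinite segment [0, b)
   satisfies |[0, b) x [0, b)| <= |[0, b)|. By induction on b: either some
   smaller segment is already as large, or [0, b) is a cardinal. *)
Lemma hessenberg b : infinite_set (below lt b) ->
  below lt b `*` below lt b #<= below lt b.
Proof.
elim: (wo_wf wo b) => {}b _ IH binf.
case: (pselect (exists2 c, lt c b & below lt b #<= below lt c)) => [[c cb bc]|bcard].
  have cinf : infinite_set (below lt c) by move=> /(card_le_finite bc).
  have cb_sub : below lt c #<= below lt b.
    by apply: subset_card_le => x xc; exact: (wo_trans wo xc cb).
  exact: card_le_trans (card_le_setX bc bc) (card_le_trans (IH c cb cinf) cb_sub).
apply: card_square_initial => //.
- by move=> x y yb xy; exact: (wo_trans wo xy yb).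
- by move=> c cb bc; apply: bcard; exists c.
Qed.

End Hessenberg.

(* Transfinite injection: if every proper initial segment of a well-order T
   has size <= |Q| and each target set P j has size > |Q|, one can choose
   pairwise distinct f j in P j, since at stage j fewer than |P j| values are
   already taken. *)
Lemma transfinite_injection T U Q (u0 : U) (lt : T -> T -> Prop) (P : T -> set U) :
  is_wellorder lt -> (forall j, below lt j #<= [set: Q]) ->
  (forall j, ~ (P j #<= [set: Q])) ->
  exists f : T -> U, (forall j, P j (f j)) /\ injective f.
Proof.
move=> wo seg large; have [f Hf] := greedy u0 setT P (wo_wf wo).
have fresh j : P j (f j) /\ forall k, setT k -> lt k j -> f k <> f j.
  apply: Hf; apply: contra_notP (large j) => stuck.
  apply: card_le_trans (seg j); apply: (card_le_surj (f := f)) => y Py.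
  apply: contra_notP stuck => ny; exists y; split => // k _ kj fk.
  by apply: ny; exists k.
exists f; split => [j|x y fxy]; first by case: (fresh j).
case: (wo_tot wo x y) => [xy|[//|yx]].
  by case: (fresh y) => _ /(_ x I xy).
by case: (fresh x) => _ /(_ y I yx); rewrite fxy.
Qed.

Definition limit_point {T} (lt : T -> T -> Prop) (C : set T) (a : T) : Prop :=
  (exists b, lt b a) /\ forall b, lt b a -> exists c, C c /\ lt b c /\ lt c a.

Lemma closedP T (lt : T -> T -> Prop) (C : set T) :
  Defs.closed lt C -> forall a, limit_point lt C a -> C a.
Proof. by move=> Ccl a [ne acc]; exact: Ccl. Qed.

Definition diag_inter {T} (lt : T -> T -> Prop) (D : T -> set T) : set T :=
  [set d | forall j, lt j d -> D j d].

Section SuccessorCardinal.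
Variables (K L : Type) (ltL : L -> L -> Prop).
Hypothesis K_infinite : infinite_set [set: K].
Hypothesis L_succ : is_succ_cardinal K ltL.

Let woL : is_wellorder ltL := proj1 L_succ.
Let L_not_le_K : ~ ([set: L] #<= [set: K]) := proj1 (proj2 L_succ).
Let segment_le_K : forall a, below ltL a #<= [set: K] := proj2 (proj2 L_succ).

Lemma K_le_segment : exists a, [set: K] #<= below ltL a.
Proof.
have [k0 _] := infinite_setN0 K_infinite.
have [//|[a _ Ka]] := @wo_card_compare _ _ k0 _ [set: L] [set: K] (wo_wf woL) (wo_tot woL).
by exists a; apply: card_le_trans Ka _; apply: subset_card_le => x [].
Qed.

Lemma K_square : [set: K] `*` [set: K] #<= [set: K].
Proof.
have [a Ka] := K_le_segment.
have ainf : infinite_set (below ltL a) by move=> /(card_le_finite Ka).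
have := card_le_trans (hessenberg woL ainf) (segment_le_K a).
exact: card_le_trans (card_le_setX Ka Ka).
Qed.

Lemma K_le_L : [set: K] #<= [set: L].
Proof. by have [a Ka] := K_le_segment; exact: card_le_trans Ka (card_leT _). Qed.

(* kappa^+ has no largest element: otherwise it would be [0, x] for some x,
   of size <= kappa + 1 = kappa. *)
Lemma L_no_max x : exists y, ltL x y.
Proof.
apply: contra_notP L_not_le_K => xmax.
have [q1 [q2 [_ [_ q12]]]] := infinite_two K_infinite.
have cover : [set: L] `<=` below ltL x `|` [set x].
  move=> y _; case: (not_lt woL (fun xy => xmax (ex_intro _ y xy))) => h; [left|right] => //.
apply: card_le_trans (subset_card_le cover) _.
exact: card_le_trans (card_le_setU1 x I I q12 (segment_le_K x)) K_square.
Qed.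

(* kappa^+ * kappa^+ = kappa^+: kappa^+ is a cardinal all of whose infinite
   initial segments satisfy Hessenberg's theorem. *)
Lemma L_square : [set: L] `*` [set: L] #<= [set: L].
Proof.
apply: (@card_square_initial _ _ woL setT) => //.
- by move=> /(card_le_finite K_le_L).
- by move=> c _ Lc; apply: L_not_le_K; exact: card_le_trans Lc (segment_le_K c).
- by move=> c _; exact: hessenberg.
Qed.

(* Regularity of kappa^+: every subset of size <= kappa is bounded. Otherwise
   kappa^+ is covered by at most kappa segments of size <= kappa. *)
Lemma L_regular (X : set L) : X #<= [set: K] -> exists c, forall x, X x -> ltL x c.
Proof.
move=> XK; apply: contra_notP L_not_le_K => unb.
have [nx Hnx] := choice L_no_max.
have cover y : [set: L] y -> exists2 x, X x & below ltL (nx x) y.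
  move=> _; apply: contra_notP unb => ny; exists y => x Xx.
  apply: contra_notP ny => nxy; exists x => //.
  exact: (le_lt_trans woL (not_lt woL nxy) (Hnx x)).
apply: card_le_trans (card_le_cover cover XK (fun x _ => segment_le_K (nx x))) K_square.
Qed.

Lemma unbounded_large (X : set L) : unbounded ltL X -> [set: L] #<= X.
Proof.
have [k0 _] := infinite_setN0 K_infinite.
have [l0 _] := @card_le_point _ _ _ _ k0 K_le_L I.
move=> Xunb; have Xlarge : ~ (X #<= [set: K]).
  move=> /L_regular [c Hc]; have [x [Xx cx]] := Xunb c.
  exact: (wo_irr woL (wo_trans woL cx (Hc x Xx))).
have [f [fX finj]] := transfinite_injection l0 woL segment_le_K (fun _ => Xlarge).
by apply: (card_le_inj (f := f)) => // x y _ _; exact: finj.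
Qed.

Lemma large_unbounded (X : set L) : [set: L] #<= X -> unbounded ltL X.
Proof.
move=> LX a; apply: contra_notP L_not_le_K => na.
have [s as_] := L_no_max a.
apply: card_le_trans LX (card_le_trans _ (segment_le_K s)); apply: subset_card_le => c Xc.
have cla : le_of ltL c a by apply: (not_lt woL) => ac; apply: na; exists c.
exact: (le_lt_trans woL cla as_).
Qed.

(* Closing off under an increasing function: the supremum d of the chain
   a, next a, next (next a), ... (which exists by regularity) lies above a,
   and every set met between x and next x for all large x accumulates at d. *)
Lemma omega_closure (next : L -> L) : (forall x, ltL x (next x)) ->
  forall a, exists2 d, ltL a d & forall (C : set L) m, ltL m d ->
    (forall x, ltL m x -> exists c, C c /\ ltL x c /\ ltL c (next x)) ->
    limit_point ltL C d.
Proof.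
move=> Hnext a; pose x n := iter n next a.
have mono y n k : ltL y (x n) -> ltL y (x (n + k)).
  move=> yn; elim: k => [|k IH]; first by rewrite addn0.
  by rewrite addnS; exact: (wo_trans woL IH (Hnext _)).
have [c Hc] : exists c, forall y, [set y | exists n, x n = y] y -> ltL y c.
  have chain_nat : [set y | exists n, x n = y] #<= [set: nat].
    by apply: (card_le_surj (f := x)) => y [n <-]; exists n.
  exact/L_regular/(card_le_trans chain_nat)/(infiniteP _).1.
have [d [Ud dleast]] := @wf_least _ _ (fun u => forall n, ltL (x n) u) (wo_wf woL)
  (ex_intro _ c (fun n => Hc _ (ex_intro _ n erefl))).
have below_chain y : ltL y d -> exists n, ltL y (x n).
  move=> yd; have /existsNP [n /(not_lt woL) yn] := dleast y yd.
  by exists n.+1; exact: (le_lt_trans woL yn (Hnext _)).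
exists d; first exact: Ud 0%N.
move=> C m md HC; split; first by exists a; exact: Ud 0%N.
move=> b bd; have [n bn] := below_chain b bd; have [k mk] := below_chain m md.
have [c0 [Cc [Nc cN]]] : exists c, C c /\ ltL (x (n + k)) c /\ ltL c (x (n + k).+1).
  by apply: HC; rewrite addnC; exact: mono mk.
exists c0; split => //; split; first exact: (wo_trans woL (mono _ _ k bn) Nc).
exact: (wo_trans woL cN (Ud (n + k).+1)).
Qed.

Lemma step_above (c : L -> L) : exists next : L -> L, forall x,
  ltL x (next x) /\ ltL (c x) (next x).
Proof.
have [nx Hnx] := choice L_no_max.
exists (fun x => nx (maxo ltL x (c x))) => x.
split; first exact: (le_lt_trans woL (maxo_l _ _ _) (Hnx _)).
exact: (le_lt_trans woL (maxo_r woL _ _) (Hnx _)).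
Qed.

Lemma club_setI (C1 C2 : set L) : club ltL C1 -> club ltL C2 -> club ltL (C1 `&` C2).
Proof.
move=> [C1cl C1unb] [C2cl C2unb]; split.
  move=> a ne acc; split; [apply: C1cl|apply: C2cl] => // b /acc [c [[? ?] ?]];
  by exists c.
have [c1 Hc1] := choice C1unb; have [c2 Hc2] := choice C2unb.
have [next Hnext] := step_above (fun x => maxo ltL (c1 x) (c2 x)).
move=> a; have [d ad Hd] := omega_closure (fun x => proj1 (Hnext x)) a.
have meets (C : set L) (c : L -> L) : (forall x, C (c x) /\ ltL x (c x)) ->
    (forall x, le_of ltL (c x) (maxo ltL (c1 x) (c2 x))) -> limit_point ltL C d.
  move=> Hc cmax; apply: Hd ad _ => x _; have [Cc xc] := Hc x.
  by exists (c x); do !split => //; exact: (le_lt_trans woL (cmax x) (proj2 (Hnext x))).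
exists d; split => //; split.
- by apply: closedP C1cl _ (meets C1 c1 Hc1 _) => x; exact: maxo_l.
- by apply: closedP C2cl _ (meets C2 c2 Hc2 _) => x; exact: maxo_r.
Qed.

Lemma club_limits (B : set L) : unbounded ltL B -> club ltL (limit_point ltL B).
Proof.
move=> Bunb; split.
  move=> a ne acc; split => // b /acc [e [[_ Be] [be ea]]].
  have [c [Bc [bc ce]]] := Be b be.
  by exists c; do !split => //; exact: (wo_trans woL ce ea).
have [c Hc] := choice Bunb; have [next Hnext] := step_above c.
move=> a; have [d ad Hd] := omega_closure (fun x => proj1 (Hnext x)) a.
exists d; split => //; apply: Hd ad _ => x _; have [Bc xc] := Hc x.
by exists (c x); do !split => //; exact: (proj2 (Hnext x)).
Qed.

(* For the
   unboundedness, the step from x must pass elements of all D j with j < x;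
   there are at most kappa of them, so regularity bounds them. *)
Lemma club_diag (D : L -> set L) : (forall j, club ltL (D j)) ->
  club ltL (diag_inter ltL D).
Proof.
move=> Dclub; split.
  move=> a [b0 b0a] acc j ja; apply: (proj1 (Dclub j)); first by exists b0.
  move=> b ba; have [e [De [be ea]]] := acc _ (maxo_lt ba ja).
  exists e; split; first exact: De (le_lt_trans woL (maxo_r woL b j) be).
  by split => //; exact: (le_lt_trans woL (maxo_l _ b j) be).
have [dd Hdd] := choice (fun p : L * L => proj2 (Dclub p.2) p.1).
have bound x : exists c, forall y, [set y | exists2 j, ltL j x & dd (x, j) = y] y -> ltL y c.
  apply: L_regular; apply: card_le_trans (segment_le_K x).
  by apply: (card_le_surj (f := fun j => dd (x, j))) => y [j jx <-]; exists j.
have [cb Hcb] := choice bound; have [next Hnext] := step_above cb.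
move=> a; have [d ad Hd] := omega_closure (fun x => proj1 (Hnext x)) a.
exists d; split => // j jd; apply: closedP (proj1 (Dclub j)) _ (Hd _ j jd _) => x jx.
have [Dj xdd] := Hdd (x, j); exists (dd (x, j)); do !split => //.
exact: (wo_trans woL (Hcb x _ (ex_intro2 _ _ j jx erefl)) (proj2 (Hnext x))).
Qed.

Lemma club_above a : club ltL [set x | ltL a x].
Proof.
split; first by move=> c [b bc] /(_ b bc) [x [ax [_ xc]]]; exact: (wo_trans woL ax xc).
have [next Hnext] := step_above (fun _ => a).
by move=> x; exists (next x); split; [exact: (proj2 (Hnext x))|exact: (proj1 (Hnext x))].
Qed.

(* Pigeonhole for more than kappa^+ indices: if each i in M has some point d
   of T i whose fibre [set j | T j d] has size <= kappa, then
   |M| <= kappa^+ * kappa = kappa^+. *)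
Lemma large_fibres_index M (T : M -> set L) : ~ ([set: M] #<= [set: L]) ->
  exists i, forall d, T i d -> ~ ([set j | T j d] #<= [set: K]).
Proof.
move=> ML; apply: contra_notP ML => nogood.
have cover i : [set: M] i ->
    exists2 d, [set d | [set j | T j d] #<= [set: K]] d & [set j | T j d] i.
  move=> _; apply: contra_notP nogood => ni; exists i => d Tid small.
  by apply: ni; exists d.
apply: card_le_trans (card_le_cover cover (card_leT _) (fun d small => small)) _.
exact: card_le_trans (card_le_setX (card_lexx [set: L]) K_le_L) L_square.
Qed.

(* If B j is contained in the closed set D j and agrees with a fixed set B0
   below some e j > j, then the accumulation points of B0 lying in the
   diagonal intersection of the D j are in every D j: below j this is the
   diagonal intersection, and in [j, e j) the point accumulates at B j. *)
Lemma agreeing_clubs_intersection (D B : L -> set L) (B0 : set L) (e : L -> L) :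
  (forall j, club ltL (D j)) -> (forall j, B j `<=` D j) -> unbounded ltL B0 ->
  (forall j, ltL j (e j) /\ B0 `&` below ltL (e j) = B j `&` below ltL (e j)) ->
  club_filter ltL [set d | forall j, D j d].
Proof.
move=> Dclub BD B0unb agree.
exists (limit_point ltL B0 `&` diag_inter ltL D); split.
  exact: club_setI (club_limits B0unb) (club_diag Dclub).
move=> d [[ne acc] Dd] j; case: (wo_tot woL j d) => [jd|dlej]; first exact: Dd.
have [je agree_j] := agree j.
have de : ltL d (e j) by case: dlej => [<-|dj]; [|exact: (wo_trans woL dj je)].
apply: (proj1 (Dclub j)) => // b bd; have [c [B0c [bc cd]]] := acc b bd.
have : (B j `&` below ltL (e j)) c by rewrite -agree_j; split => //; exact: (wo_trans woL cd de).
by case=> Bc _; exists c; do !split => //; exact: BD.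
Qed.

End SuccessorCardinal.

Theorem theorem2p2 (K L M : Type) (ltL : L -> L -> Prop) (ltM : M -> M -> Prop) :
  infinite_set [set: K] ->
  is_succ_cardinal K ltL ->
  is_succ_cardinal L ltM ->
  clubsuit_diamond ltL ->
  @Galvin L M ltL.
Proof.
move=> Kinf hL [_ [ML _]] [S [_ Sguess]] Cs HCs.
have [woL [_ segL]] := hL.
have [D HD] := choice HCs.
have [B HB] : {B : M -> set L & forall i, B i `<=` D i /\ [set: L] #<= B i /\
    stationary ltL [set a | B i `&` below ltL a = S a]}.
  apply: (@choice _ _ (fun i b => b `<=` D i /\ [set: L] #<= b /\
    stationary ltL [set a | b `&` below ltL a = S a])) => i.
  exact/Sguess/(unbounded_large Kinf hL)/(proj2 (proj1 (HD i))).
pose guessed i := [set a | B i `&` below ltL a = S a].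
(* an index whose guesses are all shared by more than kappa indices *)
have [i0 fibres] := large_fibres_index Kinf hL guessed ML.
have [e He] : {e : L -> L & forall j, ltL j (e j) /\ guessed i0 (e j)}.
  apply: (@choice _ _ (fun j a => ltL j a /\ guessed i0 a)) => j.
  by have [a [ja Ga]] := proj2 (proj2 (HB i0)) _ (club_above Kinf hL j); exists a.
(* distinct indices f j whose B (f j) agrees with B i0 below e j *)
have [f [Gf finj]] :=
  transfinite_injection i0 woL segL (fun j => fibres _ (proj2 (He j))).
exists (range f); split; first exact: inj_card_eq (in2W finj).
have [E [Eclub ED]] : club_filter ltL [set d | forall j, D (f j) d].
  apply: (agreeing_clubs_intersection Kinf hL (B := fun j => B (f j)) (e := e)).
  - by move=> j; case: (HD (f j)).
  - by move=> j; case: (HB (f j)).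
  - exact: large_unbounded Kinf hL _ (proj1 (proj2 (HB i0))).
  - by move=> j; split; [exact: (proj1 (He j))|rewrite (proj2 (He j)) (Gf j)].
exists E; split => // d Ed _ [j _ <-]; apply: (proj2 (HD (f j))); exact: ED.
Qed.
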